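(* Let $\sigma$ be a confined position on $K_{a,b}$ with sides $L$ ($|L|=a$) and $R$ ($|R|=b$), let $t\ge 1$, and suppose $\alpha_t(L)=ka$ for some positive integer $k$. Then $u_{t+1}(\sigma,w)-u_1(\sigma,w)=k$ for every $w\in R$.
   Context: Parallel chip-firing game: a position $\sigma$ assigns a nonnegative integer to each vertex; writing $\Phi_\sigma(v)$ for the number of neighbors $w$ of $v$ with $\sigma(w)\ge\deg(w)$, the step operator is $U\sigma(v)=\sigma(v)+\Phi_\sigma(v)$ if $\sigma(v)\le \deg(v)-1$ and $U\sigma(v)=\sigma(v)+\Phi_\sigma(v)-\deg(v)$ otherwise. A position is confined if every vertex satisfies $\Phi_\sigma(v)\le\sigma(v)\le\Phi_\sigma(v)+\deg(v)-1$. In $K_{a,b}$ each vertex of $L$ is adjacent exactly to all vertices of $R$ (so $L$-vertices have degree $b$, $R$-vertices degree $a$). $u_t(\sigma,v)=|\{s: 0\le s<t,\ U^s\sigma(v)\ge\deg(v)\}|$, and $\alpha_t(L)=\sum_{v\in L}u_t(\sigma,v)$. *)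

From mathcomp Require Import all_boot all_order all_algebra.
Set Implicit Arguments. Unset Strict Implicit. Unset Printing Implicit Defensive.

Section ChipFiring.
Variables (T : finType) (e : rel T).

Definition deg (v : T) : nat := #|[pred w | e v w]|.

Definition Phi (sigma : T -> nat) (v : T) : nat :=
  #|[pred w | e v w && (deg w <= sigma w)]|.

Definition U (sigma : T -> nat) : T -> nat :=
  fun v => if sigma v < deg v then sigma v + Phi sigma v
           else sigma v + Phi sigma v - deg v.

(* confined: Phi <= sigma v <= Phi + deg v - 1 (integer reading,
   i.e. sigma v < Phi + deg v). *)
Definition confined (sigma : T -> nat) : Prop :=
  forall v, Phi sigma v <= sigma v /\ sigma v < Phi sigma v + deg v.

Definition u (t : nat) (sigma : T -> nat) (v : T) : nat :=
  count (fun s => deg v <= iter s U sigma v) (iota 0 t).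

End ChipFiring.

(* Complete bipartite graph K_{a,b}: vertices inl i (side L, |L| = a)
   and inr j (side R, |R| = b); L-vertices adjacent exactly to R-vertices. *)
Definition Kab_adj (a b : nat) : rel ('I_a + 'I_b) :=
  fun x y => match x, y with
             | inl _, inr _ => true
             | inr _, inl _ => true
             | _, _ => false
             end.

Definition alphaL (a b t : nat) (sigma : 'I_a + 'I_b -> nat) : nat :=
  \sum_(i < a) u (@Kab_adj a b) t sigma (inl i).

From mathcomp Require Import all_boot all_order all_algebra.
Set Implicit Arguments. Unset Strict Implicit. Unset Printing Implicit Defensive.
Import GRing.Theory.
Local Open Scope ring_scope.

(* Chips are conserved: a vertex [v] gains one chip per firing of a neighbour
   and loses [deg v] per firing of its own, so
   [U^t sigma v + deg v * u_t(v) = sigma v + sum of u_t over the neighbours].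
   For [w] in [R] the right-hand side is [sigma w + alpha_t(L) = sigma w + k a].
   Confinement keeps every [U^s sigma w] below [2a], so [w] fires at time [s]
   exactly when [U^s sigma w %/ a = 1]; dividing the conservation identity by
   [a] then gives [u_{t+1}(w) = sigma w %/ a + k = u_1(w) + k]. *)

Section ChipConservation.
Variables (T : finType) (e : rel T).

Lemma uS t sigma v :
  (u e t.+1 sigma v = u e t sigma v + (deg e v <= iter t (U e) sigma v))%N.
Proof. by rewrite /u -addn1 iotaD count_cat /= addn0 add0n. Qed.

Lemma Phi_le_deg sigma v : (Phi e sigma v <= deg e v)%N.
Proof. by apply: subset_leq_card; apply/subsetP => x; rewrite !inE => /andP[]. Qed.

Lemma Phi_sum sigma v :
  Phi e sigma v = (\sum_(w | e v w) (deg e w <= sigma w))%N.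
Proof. by rewrite /Phi -sum1_card big_mkcondr; apply: eq_bigr => w _; case: leqP. Qed.

Lemma U_step sigma v :
  (U e sigma v + (deg e v <= sigma v) * deg e v = sigma v + Phi e sigma v)%N.
Proof.
rewrite /U; case: ltnP => [_|fires]; first by rewrite addn0.
by rewrite mul1n subnK // (leq_trans fires) ?leq_addr.
Qed.

Lemma iter_U_conservation sigma v t :
  (iter t (U e) sigma v + u e t sigma v * deg e v
    = sigma v + \sum_(w | e v w) u e t sigma w)%N.
Proof.
elim: t => [|t IH]; first by rewrite /u big1 ?addn0.
under eq_bigr do rewrite uS.
rewrite uS big_split /= -Phi_sum addnA -IH addnAC -U_step.
by rewrite mulnDl addnA addnAC.
Qed.

Lemma U_lt_double sigma v :
  (sigma v < deg e v + deg e v)%N -> (U e sigma v < deg e v + deg e v)%N.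
Proof.
move=> sigmaLt; have PhiLe := Phi_le_deg sigma v.
rewrite /U; case: (ltnP (sigma v) (deg e v)) => fires.
  by rewrite -addSn leq_add.
by rewrite ltn_subLR ?(leq_trans fires) ?leq_addr // addnA -addSn leq_add.
Qed.

Lemma iter_U_lt_double sigma v t :
  (sigma v < deg e v + deg e v)%N -> (iter t (U e) sigma v < deg e v + deg e v)%N.
Proof. by move=> sigmaLt; elim: t => //= t; apply: U_lt_double. Qed.

Lemma confined_lt_double sigma v :
  confined e sigma -> (sigma v < deg e v + deg e v)%N.
Proof.
by move=> /(_ v) [_ sigmaLt]; rewrite (leq_trans sigmaLt) ?leq_add2r ?Phi_le_deg.
Qed.

End ChipConservation.

Lemma divn_lt_double d x : (x < d + d)%N -> (x %/ d = (d <= x))%N.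
Proof.
move=> xLt; have dPos : (0 < d)%N by case: d xLt.
case: leqP => [dLe|xLt']; last exact: divn_small.
by rewrite -(subnK dLe) -[d in (_ + d)%N]mul1n divnDMl // divn_small // ltn_subLR.
Qed.

Lemma sum_Kab_neighbours_inr a b (j : 'I_b) (F : 'I_a + 'I_b -> nat) :
  (\sum_(x | Kab_adj (inr j) x) F x = \sum_(i < a) F (inl i))%N.
Proof. by rewrite big_sumType /= big_pred0_eq addn0. Qed.

Lemma deg_Kab_inr a b (j : 'I_b) : deg (@Kab_adj a b) (inr j) = a.
Proof.
rewrite /deg -sum1_card (eq_bigl (Kab_adj (inr j))) //.
by rewrite sum_Kab_neighbours_inr sum1_card card_ord.
Qed.

Theorem lemma3p3 (a b : nat) (sigma : 'I_a + 'I_b -> nat) (t k : nat) :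
  confined (@Kab_adj a b) sigma ->
  (1 <= t)%N ->
  (0 < k)%N ->
  alphaL t sigma = (k * a)%N ->
  forall w : 'I_b,
    (u (@Kab_adj a b) t.+1 sigma (inr w))%:Z
      - (u (@Kab_adj a b) 1 sigma (inr w))%:Z = k%:Z.
Proof.
move=> conf _ _ alphaE w.
set e := @Kab_adj a b.
have degE : deg e (inr w) = a by apply: deg_Kab_inr.
have lt2a s : (iter s (U e) sigma (inr w) < a + a)%N.
  by have := iter_U_lt_double s (confined_lt_double (inr w) conf); rewrite degE.
have aPos : (0 < a)%N.
  by have := leq_ltn_trans (leq0n _) (lt2a 0); rewrite addn_gt0 orbb.
have conservation := iter_U_conservation e sigma (inr w) t.
rewrite sum_Kab_neighbours_inr -/(alphaL t sigma) alphaE degE in conservation.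
have u1E : u e 1 sigma (inr w) = (sigma (inr w) %/ a)%N.
  by rewrite /u /= addn0 degE (divn_lt_double (lt2a 0)).
have ut1E : u e t.+1 sigma (inr w) = (u e 1 sigma (inr w) + k)%N.
  rewrite uS degE -(divn_lt_double (lt2a t)) addnC -divnDMl // conservation.
  by rewrite divnDMl // u1E.
by rewrite ut1E PoszD addrAC subrr add0r.
Qed.
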